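(* Let $\mathcal{C}$ and $\mathcal{D}$ be classes of countable structures axiomatized by $\mathfrak{L}_{\omega_1\omega}$-sentences, regarded as categories whose morphisms are the embeddings between structures, and let $X_{\mathcal C}$, $X_{\mathcal D}$ be the corresponding standard Borel spaces of structures with universe $\mathbb{N}$ (with the logic action of $S_\infty$). Suppose $F:\mathcal{C}\to\mathcal{D}$ is a full embedding such that (i) $F$ maps objects with universe $\omega$ to objects with universe $\omega$, and (ii) there is a Borel function $f:X_{\mathcal C}\to X_{\mathcal D}$ with $f(x)\cong F(x)$ for every $x\in X_{\mathcal C}$. Then $\cong_{\mathcal C}\ \le_{\mathrm{SPB}}\ \cong_{\mathcal D}$, witnessed by $f$; in particular $\mathrm{Aut}(x)\cong\mathrm{Aut}(f(x))$ for every $x\in X_{\mathcal C}$.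
   Context: A full embedding of categories $F:\mathcal C\to\mathcal D$ is a functor that is injective on objects and such that for all objects $a,b$ the map $\mathrm{Hom}_{\mathcal C}(a,b)\to\mathrm{Hom}_{\mathcal D}(F(a),F(b))$, $h\mapsto F(h)$, is a bijection. For a Polish group $G$ with Borel actions on standard Borel spaces $X,Y$ with orbit equivalence relations $E_a,E_b$, $E_a\le_{\mathrm{SPB}}E_b$ (stabilizer-preserving Borel reduction) means there is a Borel $f:X\to Y$ with $x\,E_a\,y\iff f(x)\,E_b\,f(y)$ for all $x,y$, and such that the stabilizers $G_x$ and $G_{f(x)}$ are isomorphic groups for every $x\in X$. For $G=S_\infty$ acting on spaces of countable structures, this means $\mathrm{Aut}(x)\cong\mathrm{Aut}(f(x))$ for all $x$. $\cong_{\mathcal C}$ denotes isomorphism on $X_{\mathcal C}$. *)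

From mathcomp Require Import all_boot.
From Stdlib Require Import ProofIrrelevance.

Set Implicit Arguments.
Unset Strict Implicit.
Unset Printing Implicit Defensive.

Record Sig := {
  sym : Type;
  ar : sym -> nat;
  sym_countable : exists c : sym -> nat, injective c }.

Record Struc (L : Sig) := {
  car : Type;
  car_countable : exists c : car -> nat, injective c;
  rel : forall s : sym L, ('I_(ar s) -> car) -> bool }.

Arguments rel {L} _ _ _.

Definition is_emb (L : Sig) (M N : Struc L) (h : car M -> car N) : Prop :=
  injective h /\ forall (s : sym L) (t : 'I_(ar s) -> car M), rel N s (h \o t) = rel M s t.

Definition Emb (L : Sig) (M N : Struc L) := {h : car M -> car N | is_emb h}.

Lemma is_emb_id (L : Sig) (M : Struc L) : is_emb (M := M) (N := M) id.
Proof. split; [exact: inj_id | by []]. Qed.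

Definition emb_id (L : Sig) (M : Struc L) : Emb M M := exist _ id (is_emb_id M).

Lemma is_emb_comp (L : Sig) (M N P : Struc L) (g : car N -> car P) (h : car M -> car N) :
  is_emb g -> is_emb h -> is_emb (g \o h).
Proof.
move=> [gi gr] [hi hr]; split; first exact: inj_comp.
by move=> s t; rewrite -hr -gr.
Qed.

Definition emb_comp (L : Sig) (M N P : Struc L) (g : Emb N P) (h : Emb M N) : Emb M P :=
  exist _ (sval g \o sval h) (is_emb_comp (proj2_sig g) (proj2_sig h)).

Definition is_iso (L : Sig) (M N : Struc L) (h : car M -> car N) : Prop :=
  is_emb h /\ forall y : car N, exists x : car M, h x = y.

Definition isomorphic (L : Sig) (M N : Struc L) : Prop :=
  exists h : car M -> car N, is_iso h.

Definition Aut (L : Sig) (M : Struc L) := {h : car M -> car M | is_iso h}.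

Lemma is_iso_comp (L : Sig) (M : Struc L) (g h : car M -> car M) :
  is_iso g -> is_iso h -> is_iso (g \o h).
Proof.
move=> [ge gs] [he hs]; split; first exact: is_emb_comp.
move=> y; have [z <-] := gs y; have [x <-] := hs z; by exists x.
Qed.

Definition aut_comp (L : Sig) (M : Struc L) (a b : Aut M) : Aut M :=
  exist _ (sval a \o sval b) (is_iso_comp (proj2_sig a) (proj2_sig b)).

Definition group_isomorphic (L1 L2 : Sig) (M : Struc L1) (N : Struc L2) : Prop :=
  exists Phi : Aut M -> Aut N,
    bijective Phi /\ forall a b : Aut M, Phi (aut_comp a b) = aut_comp (Phi a) (Phi b).

Definition XL (L : Sig) := forall s : sym L, ('I_(ar s) -> nat) -> bool.

Definition struc_of (L : Sig) (x : XL L) : Struc L :=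
  {| car := nat; car_countable := ex_intro _ id (@inj_id nat); rel := x |}.

(* Borel sets of X_L: sigma-algebra generated by the subbasic clopen sets
   {x | x s t = b} of the product topology on 2^(disjoint union of N^(ar s)). *)
Inductive borel (L : Sig) : (XL L -> Prop) -> Prop :=
| borel_basic (s : sym L) (t : 'I_(ar s) -> nat) (b : bool) :
    borel (fun x => x s t = b)
| borel_compl (A : XL L -> Prop) : borel A -> borel (fun x => ~ A x)
| borel_union (A : nat -> XL L -> Prop) :
    (forall n, borel (A n)) -> borel (fun x => exists n, A n x).

Definition borel_fun_on (L1 L2 : Sig) (P : XL L1 -> Prop) (f : XL L1 -> XL L2) : Prop :=
  forall B : XL L2 -> Prop, borel B ->
    exists A : XL L1 -> Prop, borel A /\ forall x, P x -> (B (f x) <-> A x).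

Inductive formula (L : Sig) : Type :=
| FRel (s : sym L) (t : 'I_(ar s) -> nat)
| FEq (i j : nat)
| FNot (p : formula L)
| FConj (ps : nat -> formula L)
| FEx (i : nat) (p : formula L).

Fixpoint sat (L : Sig) (M : Struc L) (v : nat -> car M) (p : formula L) : Prop :=
  match p with
  | FRel s t => rel M s (v \o t)
  | FEq i j => v i = v j
  | FNot q => ~ sat v q
  | FConj ps => forall n, sat v (ps n)
  | FEx i q => exists a : car M, sat (fun k => if k == i then a else v k) q
  end.

Fixpoint free_in (L : Sig) (k : nat) (p : formula L) : Prop :=
  match p with
  | FRel s t => exists j, t j = k
  | FEq i j => i = k \/ j = k
  | FNot q => free_in k q
  | FConj ps => exists n, free_in k (ps n)
  | FEx i q => k <> i /\ free_in k q
  end.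

Definition sentence (L : Sig) (p : formula L) : Prop := forall k, ~ free_in k p.

(* M |= phi  (structures are nonempty, as usual in model theory) *)
Definition models (L : Sig) (M : Struc L) (p : formula L) : Prop :=
  (exists a : car M, True) /\ forall v : nat -> car M, sat v p.

Definition Xmod (L : Sig) (p : formula L) : XL L -> Prop :=
  fun x => models (struc_of x) p.

Record full_embedding (LC LD : Sig) (C : Struc LC -> Prop) (D : Struc LD -> Prop)
    (Fo : Struc LC -> Struc LD)
    (Fm : forall M N : Struc LC, Emb M N -> Emb (Fo M) (Fo N)) : Prop := {
  fe_obj : forall M, C M -> D (Fo M);
  fe_id : forall M, C M -> Fm M M (emb_id M) = emb_id (Fo M);
  fe_comp : forall M N P, C M -> C N -> C P ->
      forall (g : Emb N P) (h : Emb M N),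
      Fm M P (emb_comp g h) = emb_comp (Fm N P g) (Fm M N h);
  fe_inj : forall M N, C M -> C N -> Fo M = Fo N -> M = N;
  fe_full : forall M N, C M -> C N -> bijective (Fm M N) }.

(* f witnesses  E_P <=_SPB E_Q  for isomorphism on the subspaces P, Q.
   For the logic action of S_infinity, the stabilizer of x is Aut(x). *)
Definition SPB_witness (L1 L2 : Sig) (P : XL L1 -> Prop) (Q : XL L2 -> Prop)
    (f : XL L1 -> XL L2) : Prop :=
  borel_fun_on P f /\
  (forall x, P x -> Q (f x)) /\
  (forall x y, P x -> P y ->
     (isomorphic (struc_of x) (struc_of y) <-> isomorphic (struc_of (f x)) (struc_of (f y)))) /\
  (forall x, P x -> group_isomorphic (struc_of x) (struc_of (f x))).

Arguments full_embedding {LC LD} C D Fo Fm.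

(* A full embedding F preserves and reflects isomorphisms, since it respects
   identities and composition and is bijective on hom-sets; for the same
   reasons it restricts to a group isomorphism Aut(M) ~ Aut(F M).  As f x is
   isomorphic to F x, transporting along that isomorphism gives
   x ~ y <-> f x ~ f y and Aut(x) ~ Aut(F x) ~ Aut(f x). *)

From Pilot Require Import Defs.
From mathcomp Require Import all_boot.
From Stdlib Require Import FunctionalExtensionality ClassicalEpsilon ProofIrrelevance.

Set Implicit Arguments.
Unset Strict Implicit.
Unset Printing Implicit Defensive.

Lemma inj_surj_bijective (A B : Type) (f : A -> B) :
  injective f -> (forall y, exists x, f x = y) -> bijective f.
Proof.
move=> f_inj f_surj.
pose g y := proj1_sig (constructive_indefinite_description _ (f_surj y)).
have gK : cancel g f by move=> y; rewrite /g; case: constructive_indefinite_description.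
by exists g => // x; apply: f_inj; rewrite gK.
Qed.

Section Isomorphisms.

Variable L : Sig.

Lemma emb_inj (M N : Struc L) (e1 e2 : Emb M N) : sval e1 = sval e2 -> e1 = e2.
Proof. by apply: eq_sig_hprop => *; apply: proof_irrelevance. Qed.

Lemma aut_inj (M : Struc L) (a b : Aut M) : sval a = sval b -> a = b.
Proof. by apply: eq_sig_hprop => *; apply: proof_irrelevance. Qed.

Definition emb_of_aut (M : Struc L) (a : Aut M) : Emb M M :=
  exist _ (sval a) (proj1 (proj2_sig a)).

Lemma is_iso_can (M N : Struc L) (h : car M -> car N) (g : car N -> car M) :
  is_emb h -> cancel g h -> is_iso h.
Proof. by move=> h_emb gK; split => // y; exists (g y). Qed.

Lemma is_iso_of_right_inverse (M N : Struc L) (h : Emb M N) (g : Emb N M) :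
  emb_comp h g = emb_id N -> is_iso (sval h).
Proof.
move=> hg_id; apply: (is_iso_can (g := sval g)); first exact: proj2_sig.
by move=> y; have := f_equal (fun e => sval e y) hg_id.
Qed.

Lemma comp_is_iso (M N P : Struc L) (g : car N -> car P) (h : car M -> car N) :
  is_iso g -> is_iso h -> is_iso (g \o h).
Proof.
move=> [g_emb g_surj] [h_emb h_surj]; split; first exact: is_emb_comp.
by move=> y; have [z <-] := g_surj y; have [x <-] := h_surj z; exists x.
Qed.

Lemma is_iso_inv (M N : Struc L) (h : car M -> car N) :
  is_iso h -> exists g : car N -> car M, [/\ is_iso g, cancel h g & cancel g h].
Proof.
move=> h_iso; have [[h_inj h_rel] h_surj] := h_iso.
have [g hK gK] := inj_surj_bijective h_inj h_surj.
exists g; split => //; apply: (is_iso_can (g := h)) => //; split; first exact: can_inj gK.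
move=> s t; rewrite -h_rel; congr (Defs.rel _ s).
by apply: functional_extensionality => i /=; rewrite gK.
Qed.

Lemma isomorphic_sym (M N : Struc L) : isomorphic M N -> isomorphic N M.
Proof. by move=> [h /is_iso_inv[g [g_iso _ _]]]; exists g. Qed.

Lemma isomorphic_trans (M N P : Struc L) :
  isomorphic M N -> isomorphic N P -> isomorphic M P.
Proof. by move=> [h h_iso] [g g_iso]; exists (g \o h); exact: comp_is_iso. Qed.

Lemma comp_upd (A B : Type) (h : A -> B) (i : nat) (a : A) (v : nat -> A) :
  h \o (fun k => if k == i then a else v k) = (fun k => if k == i then h a else h (v k)).
Proof. by apply: functional_extensionality => k /=; case: (k == i). Qed.

Lemma sat_iso (M N : Struc L) (h : car M -> car N) :
  is_iso h -> forall (p : formula L) v, sat v p <-> sat (h \o v) p.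
Proof.
move=> [[h_inj h_rel] h_surj] p; elim: p => [s t|i j|p IH|ps IH|i p IH] v /=.
- by rewrite -h_rel.
- by split=> [-> | /h_inj].
- by rewrite IH.
- by split=> H n; apply/IH.
- split=> [[a Ha] | [b Hb]].
  + by exists (h a); rewrite -comp_upd -IH.
  + by have [a Ea] := h_surj b; exists a; rewrite IH comp_upd Ea.
Qed.

Lemma models_iso (M N : Struc L) (h : car M -> car N) (p : formula L) :
  is_iso h -> models M p -> models N p.
Proof.
move=> h_iso [[a _] M_p]; split; first by exists (h a).
have [g [_ _ gK]] := is_iso_inv h_iso.
move=> v; have -> : v = h \o (g \o v) by apply: functional_extensionality => k /=; rewrite gK.
exact/(sat_iso h_iso).
Qed.

Lemma isomorphic_group_isomorphic (M N : Struc L) :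
  isomorphic M N -> group_isomorphic M N.
Proof.
move=> [j j_iso]; have [j' [j'_iso jK j'K]] := is_iso_inv j_iso.
pose conj (a : Aut M) : Aut N :=
  exist _ (j \o sval a \o j') (comp_is_iso (comp_is_iso j_iso (proj2_sig a)) j'_iso).
pose unconj (c : Aut N) : Aut M :=
  exist _ (j' \o sval c \o j) (comp_is_iso (comp_is_iso j'_iso (proj2_sig c)) j_iso).
exists conj; split.
  exists unconj => [a | c]; apply: aut_inj; apply: functional_extensionality => y /=.
  - by rewrite !jK.
  - by rewrite !j'K.
by move=> a b; apply: aut_inj; apply: functional_extensionality => y /=; rewrite jK.
Qed.

End Isomorphisms.

Lemma group_isomorphic_trans (L1 L2 L3 : Sig) (M : Struc L1) (N : Struc L2) (P : Struc L3) :
  group_isomorphic M N -> group_isomorphic N P -> group_isomorphic M P.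
Proof.
move=> [Phi [Phi_bij Phi_hom]] [Psi [Psi_bij Psi_hom]].
exists (Psi \o Phi); split; first exact: bij_comp.
by move=> a b /=; rewrite Phi_hom Psi_hom.
Qed.

Section FullEmbedding.

Variables (LC LD : Sig) (C : Struc LC -> Prop) (D : Struc LD -> Prop).
Variables (Fo : Struc LC -> Struc LD) (Fm : forall M N, Emb M N -> Emb (Fo M) (Fo N)).
Hypothesis hF : full_embedding C D Fo Fm.

Lemma fe_emb_comp_id (M N : Struc LC) (h : Emb M N) (g : Emb N M) :
  C M -> C N -> emb_comp h g = emb_id N -> emb_comp (Fm h) (Fm g) = emb_id (Fo N).
Proof. by move=> CM CN hg_id; rewrite -(fe_comp hF CN CM CN) hg_id (fe_id hF CN). Qed.

Lemma fe_preserves_iso (M N : Struc LC) (h : Emb M N) :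
  C M -> C N -> is_iso (sval h) -> is_iso (sval (Fm h)).
Proof.
move=> CM CN /is_iso_inv[g [g_iso _ gK]].
apply: (is_iso_of_right_inverse (g := Fm (exist _ g (proj1 g_iso)))).
apply: fe_emb_comp_id => //; apply: emb_inj.
by apply: functional_extensionality => y /=; rewrite gK.
Qed.

Lemma fe_reflects_iso (M N : Struc LC) (k : Emb (Fo M) (Fo N)) :
  C M -> C N -> is_iso (sval k) -> exists h : Emb M N, is_iso (sval h) /\ Fm h = k.
Proof.
move=> CM CN /is_iso_inv[k' [k'_iso _ k'K]].
have [G _ GF] := fe_full hF CM CN.
have [G' _ GF'] := fe_full hF CN CM.
have /bij_inj Fm_inj := fe_full hF CN CN.
exists (G k); split => //.
pose ke : Emb (Fo N) (Fo M) := exist _ k' (proj1 k'_iso).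
apply: (is_iso_of_right_inverse (g := G' ke)).
apply: Fm_inj; rewrite (fe_comp hF CN CM CN) (fe_id hF CN) GF GF'.
by apply: emb_inj; apply: functional_extensionality => y /=; rewrite k'K.
Qed.

Lemma fe_isomorphic (M N : Struc LC) :
  C M -> C N -> isomorphic M N <-> isomorphic (Fo M) (Fo N).
Proof.
move=> CM CN; split=> [[h h_iso] | [k k_iso]].
- exists (sval (Fm (exist _ h (proj1 h_iso)))); exact: fe_preserves_iso.
- have [h [h_iso _]] := fe_reflects_iso (k := exist _ k (proj1 k_iso)) CM CN k_iso.
  by exists (sval h).
Qed.

Lemma fe_group_isomorphic (M : Struc LC) : C M -> group_isomorphic M (Fo M).
Proof.
move=> CM; have [G FG _] := fe_full hF CM CM.
pose Phi (a : Aut M) : Aut (Fo M) :=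
  exist _ (sval (Fm (emb_of_aut a))) (fe_preserves_iso (h := emb_of_aut a) CM CM (proj2_sig a)).
exists Phi; split.
  apply: inj_surj_bijective.
  - move=> a b /(f_equal sval)/emb_inj/(f_equal G); rewrite !FG.
    by move/(f_equal sval)/aut_inj.
  - move=> c; have [h [h_iso Eh]] := fe_reflects_iso (k := emb_of_aut c) CM CM (proj2_sig c).
    exists (exist _ (sval h) h_iso); apply: aut_inj => /=.
    have -> : emb_of_aut (exist _ (sval h) h_iso) = h by apply: emb_inj.
    by rewrite Eh.
move=> a b; apply: aut_inj => /=.
have -> : emb_of_aut (aut_comp a b) = emb_comp (emb_of_aut a) (emb_of_aut b) by apply: emb_inj.
by rewrite (fe_comp hF CM CM CM).
Qed.

End FullEmbedding.

Theorem proposition5p6 (LC LD : Sig) (phiC : formula LC) (phiD : formula LD)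
  (sentC : sentence phiC) (sentD : sentence phiD)
  (Fo : Struc LC -> Struc LD)
  (Fm : forall M N : Struc LC, Emb M N -> Emb (Fo M) (Fo N))
  (hF : full_embedding (fun M => models M phiC) (fun N => models N phiD) Fo Fm)
  (homega : forall M : Struc LC, models M phiC -> car M = nat -> car (Fo M) = nat)
  (f : XL LC -> XL LD)
  (fBorel : borel_fun_on (Xmod phiC) f)
  (fF : forall x : XL LC, Xmod phiC x -> isomorphic (struc_of (f x)) (Fo (struc_of x))) :
  SPB_witness (Xmod phiC) (Xmod phiD) f.
Proof.
have Ff x (Cx : Xmod phiC x) := isomorphic_sym (fF x Cx).
split; [exact: fBorel | split; [| split]].
- move=> x Cx; have [j j_iso] := Ff x Cx.
  exact: models_iso j_iso (fe_obj hF Cx).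
- move=> x y Cx Cy; rewrite (fe_isomorphic hF Cx Cy).
  split=> [iso_F | iso_f].
  + exact: isomorphic_trans (fF x Cx) (isomorphic_trans iso_F (Ff y Cy)).
  + exact: isomorphic_trans (Ff x Cx) (isomorphic_trans iso_f (fF y Cy)).
- move=> x Cx.
  apply: group_isomorphic_trans (fe_group_isomorphic hF Cx) _.
  exact: isomorphic_group_isomorphic (Ff x Cx).
Qed.
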